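(* Assume that $K$ is w-simple, that $\langle S|$ and the inhomogeneities are such that the covectors $\langle h_1,\dots,h_N|$, $(h_1,\dots,h_N)\in\{0,\dots,n-1\}^N$, form a basis of the dual of $\mathcal H$, and let $\mathbb B^{(K)}(\lambda)$ be the operator, diagonal in this basis, defined by $\langle h_1,\dots,h_N|\mathbb B^{(K)}(\lambda)=b_{h_1,\dots,h_N}(\lambda)\langle h_1,\dots,h_N|$ with $b_{h_1,\dots,h_N}(\lambda)=\prod_{a=1}^N(\lambda-\xi_a)^{n-1-h_a}(\lambda-\xi_a+\eta)^{h_a}$. Let $t_1(\lambda)$ be any eigenvalue of $T^{(K)}_1(\lambda)$ and let $\varphi_t(\lambda)=\prod_{a=1}^{\mathsf M}(\lambda-\lambda_a)$, with $\mathsf M\le N$ and $\lambda_a\ne\xi_b$ for all $a,b$, be the polynomial satisfying with $t_0\equiv 1,t_1,\dots,t_n$ the quantum spectral curve equation $\sum_{b=0}^n\alpha_b(\lambda)\varphi_t(\lambda-b\eta)t_{n-b}(\lambda-b\eta)=0$ with $\bar\alpha=\mathsf k_1$. Then the eigenvector of $T^{(K)}_1(\lambda)$ associated with $t_1(\lambda)$ is (up to normalization) $$|t\rangle=\prod_{a=1}^{\mathsf M}\mathbb B^{(K)}(\lambda_a)\,|t_0\rangle .$$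
   Context: Fix integers $n\ge 2$, $N\ge1$, $\eta\in\mathbb C$ and generic inhomogeneities $\xi_1,\dots,\xi_N$. Let $\mathcal H=\bigotimes_{l=1}^N\mathbb C^n$, $R_{a,b}(\lambda)=\lambda I+\eta\,\mathbb P_{a,b}$ ($\mathbb P$ the permutation), $M^{(K)}_a(\lambda)=K_aR_{a,N}(\lambda-\xi_N)\cdots R_{a,1}(\lambda-\xi_1)$, and fused transfer matrices $T^{(K)}_m(\lambda)=\mathrm{tr}_{1,\dots,m}[P^-_{1,\dots,m}M_1^{(K)}(\lambda)\cdots M_m^{(K)}(\lambda-(m-1)\eta)]$ with $P^-_{1,\dots,m}=\frac1{m!}\sum_{\pi\in S_m}\mathrm{sgn}(\pi)P_\pi$. Set $T_m^{(K,\infty)}=\mathrm{tr}_{1,\dots,m}[P^-_{1,\dots,m}K_1\cdots K_m]$, $g_a^{(m)}(\lambda)=\prod_{b\ne a}\frac{\lambda-\xi_b}{\xi_a-\xi_b}\prod_{b=1}^N\prod_{r=1}^{m-1}\frac1{\xi_a-\xi_b-r\eta}$. Given an eigenvalue $t_1$ of $T_1^{(K)}$ (a function with $T_1^{(K)}(\lambda)v=t_1(\lambda)v$ for all $\lambda$, $v\neq0$), set $t_0\equiv1$, $t_n(\lambda)=\mathrm{q\text{-}det}\,M^{(K)}(\lambda)=\det K\prod_{b=1}^N[(\lambda-\xi_b+\eta)\prod_{m=1}^{n-1}(\lambda-\xi_b-m\eta)]$ and, for $m\in\{1,\dots,n-2\}$, $t_{m+1}(\lambda)=\prod_{b=1}^N\prod_{r=1}^m(\lambda-\xi_b-r\eta)[T^{(K,\infty)}_{m+1}\prod_b(\lambda-\xi_b)+\sum_ag_a^{(m+1)}(\lambda)t_1(\xi_a)t_m(\xi_a-\eta)]$.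 Coefficients: $\alpha_0=-1$, $\alpha_1(\lambda)=\bar\alpha\prod_{a=1}^N(\lambda+\eta-\xi_a)$, $\alpha_{1+j}(\lambda)=(-1)^j\prod_{h=0}^j\alpha_1(\lambda-h\eta)$. A matrix is w-simple if each eigenvalue has a one-dimensional eigenspace. Write $K=W_KK_JW_K^{-1}$ with $K_J$ an upper-triangular Jordan form such that $K_Je_1=\mathsf k_1e_1$, $\mathsf k_1\ne0$, $e_1=(1,0,\dots,0)^T$; $|t_0\rangle=(\bigotimes_{a=1}^NW_{K,a})\,e_1^{\otimes N}$. Given a covector $\langle S|$, $\langle h_1,\dots,h_N|=\langle S|\prod_{l=1}^N(T_1^{(K)}(\xi_l))^{h_l}$. *)

From HB Require Import structures.
From mathcomp Require Import all_boot all_order all_algebra all_fingroup.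
Set Implicit Arguments. Unset Strict Implicit. Unset Printing Implicit Defensive.
Import Order.TTheory GRing.Theory Num.Theory.
Local Open Scope ring_scope.

Section Model.
Variable C : numClosedFieldType.

(* Matrices indexed by an arbitrary finite type T (basis of a tensor product). *)
Definition mkop (T : finType) (f : T -> T -> C) : 'M[C]_#|{: T}| :=
  \matrix_(i, j) f (enum_val i) (enum_val j).
Definition ent (T : finType) (A : 'M[C]_#|{: T}|) (x y : T) : C :=
  A (enum_rank x) (enum_rank y).
Definition mkvec (T : finType) (f : T -> C) : 'cV[C]_#|{: T}| :=
  \col_i f (enum_val i).

Variables (n N : nat).
(* basis labels of H = (C^n)^{(x) N} : configurations 'I_N -> 'I_n *)
Definition cfg := {ffun 'I_N -> 'I_n}.
Definition Hdim := #|{: cfg}|.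
(* auxiliary space (x) H *)
Definition acfg := ('I_n * cfg)%type.

Definition upd (c : cfg) (l : 'I_N) (i : 'I_n) : cfg :=
  [ffun k => if k == l then i else c k].

(* permutation P_{a,l} of auxiliary space a with quantum site l *)
Definition Pal (l : 'I_N) : 'M[C]_#|{: acfg}| :=
  mkop (fun x y : acfg => ((x.1 == y.2 l) && (x.2 == upd y.2 l y.1))%:R).
Definition Ral (eta : C) (l : 'I_N) (mu : C) : 'M[C]_#|{: acfg}| :=
  mu%:M + eta *: Pal l.
Definition Kaux (K : 'M[C]_n) : 'M[C]_#|{: acfg}| :=
  mkop (fun x y : acfg => K x.1 y.1 * (x.2 == y.2)%:R).
Definition Mono (eta : C) (xi : 'I_N -> C) (K : 'M[C]_n) (la : C) : 'M[C]_#|{: acfg}| :=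
  Kaux K *m foldr (fun l A => Ral eta l (la - xi l) *m A) 1%:M (rev (enum 'I_N)).
Definition T1 (eta : C) (xi : 'I_N -> C) (K : 'M[C]_n) (la : C) : 'M[C]_Hdim :=
  mkop (fun c c' : cfg => \sum_(i : 'I_n) ent (Mono eta xi K la) (i, c) (i, c')).

Definition Kten (m : nat) (K : 'M[C]_n) : 'M[C]_#|{: {ffun 'I_m -> 'I_n}}| :=
  mkop (fun c c' : {ffun 'I_m -> 'I_n} => \prod_(k < m) K (c k) (c' k)).
Definition Pperm (m : nat) (s : 'S_m) : 'M[C]_#|{: {ffun 'I_m -> 'I_n}}| :=
  mkop (fun c c' : {ffun 'I_m -> 'I_n} => (c == [ffun k => c' ((s^-1)%g k)])%:R).
Definition Pminus (m : nat) : 'M[C]_#|{: {ffun 'I_m -> 'I_n}}| :=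
  (m`!%:R)^-1 *: \sum_(s : 'S_m) ((-1) ^+ s) *: Pperm s.
Definition Tinf (m : nat) (K : 'M[C]_n) : C := \tr (Pminus m *m Kten m K).

Definition gfun (eta : C) (xi : 'I_N -> C) (m : nat) (a : 'I_N) (la : C) : C :=
  (\prod_(b < N | b != a) ((la - xi b) / (xi a - xi b))) *
  \prod_(b < N) \prod_(1 <= r < m) (xi a - xi b - r%:R * eta)^-1.

Definition qdet (eta : C) (xi : 'I_N -> C) (K : 'M[C]_n) (la : C) : C :=
  \det K * \prod_(b < N) ((la - xi b + eta) * \prod_(1 <= m < n) (la - xi b - m%:R * eta)).

(* t_0 = 1, t_1 given, t_{m+1} (1 <= m <= n-2) by the fusion formula, t_n = q-det *)
Fixpoint tfun (eta : C) (xi : 'I_N -> C) (K : 'M[C]_n) (t1 : C -> C) (m : nat) (la : C)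
  : C :=
  match m with
  | 0 => 1
  | m'.+1 =>
    if m'.+1 == n then qdet eta xi K la
    else if m' == 0%N then t1 la
    else (\prod_(b < N) \prod_(1 <= r < m'.+1) (la - xi b - r%:R * eta)) *
         (Tinf m'.+1 K * \prod_(b < N) (la - xi b) +
          \sum_(a < N) gfun eta xi m'.+1 a la * t1 (xi a) * tfun eta xi K t1 m' (xi a - eta))
  end.

Definition alpha1 (abar eta : C) (xi : 'I_N -> C) (la : C) : C :=
  abar * \prod_(a < N) (la + eta - xi a).
Definition alpha (abar eta : C) (xi : 'I_N -> C) (j : nat) (la : C) : C :=
  match j with
  | 0 => -1
  | j'.+1 => (-1) ^+ j' * \prod_(h < j'.+1) alpha1 abar eta xi (la - h%:R * eta)
  end.

Definition wsimple (K : 'M[C]_n) : Prop :=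
  forall a : C, eigenvalue K a -> \rank (eigenspace K a) = 1%N.

Definition jordan_form (J : 'M[C]_n) : Prop :=
  forall i j : 'I_n,
    [/\ ((j : nat) != i -> (j : nat) != i.+1 -> J i j = 0),
        ((j : nat) = i.+1 -> J i j = 0 \/ J i j = 1) &
        ((j : nat) = i.+1 -> J i j = 1 -> J i i = J j j)].

Definition e1 : 'cV[C]_n := \col_(i < n) ((i : nat) == 0%N)%:R.

Definition tenop (A : 'M[C]_n) : 'M[C]_Hdim :=
  mkop (fun c c' : cfg => \prod_(l < N) A (c l) (c' l)).
Definition tenvec (w : 'cV[C]_n) : 'cV[C]_Hdim :=
  mkvec (fun c : cfg => \prod_(l < N) w (c l) 0).

Definition t0vec (W : 'M[C]_n) : 'cV[C]_Hdim := tenop W *m tenvec e1.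

Definition hcovec (eta : C) (xi : 'I_N -> C) (K : 'M[C]_n) (S : 'rV[C]_Hdim) (h : cfg)
  : 'rV[C]_Hdim :=
  S *m foldr (fun l A => (T1 eta xi K (xi l)) ^+ (h l) *m A) 1%:M (enum 'I_N).

Definition hmatrix (eta : C) (xi : 'I_N -> C) (K : 'M[C]_n) (S : 'rV[C]_Hdim)
  : 'M[C]_Hdim :=
  \matrix_(i, j) hcovec eta xi K S (enum_val i) 0 j.

Definition bfun (eta : C) (xi : 'I_N -> C) (h : cfg) (la : C) : C :=
  \prod_(a < N) ((la - xi a) ^+ (n.-1 - h a) * (la - xi a + eta) ^+ (h a)).

Definition tvec (B : C -> 'M[C]_Hdim) (lam : seq C) (v0 : 'cV[C]_Hdim) : 'cV[C]_Hdim :=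
  foldr (fun x v => B x *m v) v0 lam.
End Model.

(* Work in the basis <h| = <S| prod_l T_1(xi_l)^(h_l) of the dual space. A joint
   eigenvector v of the T_1(xi_l), with eigenvalues c_l, has coordinates
   <h|v> = prod_l c_l^(h_l) <S|v>, so it is determined up to a scalar. The reference state
   |t_0> = (W_K e_1)^(x)N is such a joint eigenvector, with eigenvalues alpha_1(xi_l),
   because R_{a,l}(0) = eta P_{a,l} moves the auxiliary vector onto site l. All terms of
   the quantum spectral curve share the factor prod_c (lambda - xi_c + eta); dividing it
   out (t_1 is polynomial, being an eigenvalue of a polynomial matrix) and evaluating at
   lambda = xi_a + (n-1) eta, where every t_m with m >= 2 is taken at its zero
   xi_a + (m-1) eta, gives t_1(xi_a) phi(xi_a) = alpha_1(xi_a) phi(xi_a - eta). As B is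
   diagonal on the basis, these identities yield
   <h|t> = Z prod_l t_1(xi_l)^(h_l) <S|t_0>  with  Z = prod_l prod_a (lambda_a - xi_l)^(n-1),
   which is nonzero, so |t> is a nonzero multiple of the eigenvector of t_1. *)

From HB Require Import structures.
From mathcomp Require Import all_boot all_order all_algebra all_fingroup.
From mathcomp Require Import ring zify.
Import Order.TTheory GRing.Theory Num.Theory.
Set Implicit Arguments. Unset Strict Implicit. Unset Printing Implicit Defensive.
Local Open Scope ring_scope.

Section PolynomialFunctions.
Variable C : numClosedFieldType.

Definition polyfun (f : C -> C) := exists p : {poly C}, f =1 horner p.

Lemma eq_polyfun f g : f =1 g -> polyfun f -> polyfun g.
Proof. by move=> fg [p Hp]; exists p => x; rewrite -fg. Qed.

Lemma polyfun_const c : polyfun (fun _ => c).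
Proof. by exists c%:P => x; rewrite hornerC. Qed.

Lemma polyfun_id : polyfun id.
Proof. by exists 'X => x; rewrite hornerX. Qed.

Lemma polyfun_add f g : polyfun f -> polyfun g -> polyfun (fun x => f x + g x).
Proof. by move=> [p Hp] [q Hq]; exists (p + q) => x; rewrite hornerD Hp Hq. Qed.

Lemma polyfun_opp f : polyfun f -> polyfun (fun x => - f x).
Proof. by move=> [p Hp]; exists (- p) => x; rewrite hornerN Hp. Qed.

Lemma polyfun_mul f g : polyfun f -> polyfun g -> polyfun (fun x => f x * g x).
Proof. by move=> [p Hp] [q Hq]; exists (p * q) => x; rewrite hornerM Hp Hq. Qed.

Lemma polyfun_comp f g : polyfun f -> polyfun g -> polyfun (fun x => f (g x)).
Proof.
by move=> [p Hp] [q Hq]; exists (p \Po q) => x; rewrite horner_comp Hp Hq.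
Qed.

Lemma polyfun_sum (I : Type) (r : seq I) (P : pred I) (F : I -> C -> C) :
  (forall i, polyfun (F i)) -> polyfun (fun x => \sum_(i <- r | P i) F i x).
Proof.
move=> HF; elim: r => [|i r [p Hp]].
  by exists 0 => x; rewrite big_nil horner0.
have [q Hq] := HF i.
exists (if P i then q + p else p) => x.
by rewrite big_cons; case: (P i); rewrite ?hornerD Hp ?Hq.
Qed.

Lemma polyfun_prod (I : Type) (r : seq I) (P : pred I) (F : I -> C -> C) :
  (forall i, polyfun (F i)) -> polyfun (fun x => \prod_(i <- r | P i) F i x).
Proof.
move=> HF; elim: r => [|i r [p Hp]].
  by exists 1 => x; rewrite big_nil hornerC.
have [q Hq] := HF i.
exists (if P i then q * p else p) => x.
by rewrite big_cons; case: (P i); rewrite ?hornerM Hp ?Hq.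
Qed.

Lemma poly_eq0_everywhere (p : {poly C}) : (forall x, p.[x] = 0) -> p = 0.
Proof.
move=> p0; apply: (@roots_geq_poly_eq0 _ _ [seq i%:R | i <- iota 0 (size p)]).
- by apply/allP => _ /mapP[i _ ->]; rewrite /root p0.
- by rewrite map_inj_uniq ?iota_uniq // => i j /eqP; rewrite eqr_nat => /eqP.
- by rewrite size_map size_iota.
Qed.

Lemma polyfun_mul_eq0 (d g : C -> C) (p : {poly C}) :
  p != 0 -> d =1 horner p -> polyfun g -> (forall x, d x * g x = 0) -> g =1 (fun=> 0).
Proof.
move=> p_neq0 dE [q gE] dg0 x.
have : p * q = 0 by apply: poly_eq0_everywhere => y; rewrite hornerM -dE -gE dg0.
by move/eqP; rewrite mulf_eq0 (negbTE p_neq0) => /eqP q0; rewrite gE q0 horner0.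
Qed.

End PolynomialFunctions.

Ltac polyfun :=
  repeat first
    [ assumption | apply: polyfun_const | apply: polyfun_id
    | apply: polyfun_add | apply: polyfun_opp | apply: polyfun_mul
    | apply: polyfun_sum => ? | apply: polyfun_prod => ? ].

Section PolynomialMatrices.
Variable C : numClosedFieldType.

Definition polyfun_mx p q (F : C -> 'M[C]_(p, q)) := forall i j, polyfun (fun x => F x i j).

Lemma polyfun_mx_const p q (A : 'M[C]_(p, q)) : polyfun_mx (fun=> A).
Proof. by move=> i j; apply: polyfun_const. Qed.

Lemma polyfun_mulmx p q r (F : C -> 'M[C]_(p, q)) (G : C -> 'M[C]_(q, r)) :
  polyfun_mx F -> polyfun_mx G -> polyfun_mx (fun x => F x *m G x).
Proof.
move=> HF HG i j; have [p0 Hp] := polyfun_sum (index_enum 'I_q) xpredT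
  (fun k => polyfun_mul (HF i k) (HG k j)).
by exists p0 => x; rewrite mxE -Hp.
Qed.

Lemma eigenvalue_polyfun p (A : C -> 'M[C]_p) (v : 'cV[C]_p) (f : C -> C) :
  polyfun_mx A -> v != 0 -> (forall x, A x *m v = f x *: v) -> polyfun f.
Proof.
move=> HA /cV0Pn[i vi_neq0] Av.
have [q Hq] : polyfun (fun x => (A x *m v) i 0 / v i 0).
  apply: polyfun_mul; last exact: polyfun_const.
  have [q Hq] := polyfun_mulmx HA (polyfun_mx_const v) i 0.
  by exists q.
by exists q => x; rewrite -Hq Av mxE mulfK.
Qed.

End PolynomialMatrices.

Section TransferMatrixPolynomial.
Variables (C : numClosedFieldType) (n N : nat) (eta : C) (xi : 'I_N -> C) (K : 'M[C]_n).

Lemma T1_polyfun_mx : polyfun_mx (T1 eta xi K).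
Proof.
have Ral_poly l : polyfun_mx (fun la => Ral n eta l (la - xi l)).
  move=> i j; apply: (@eq_polyfun _
    (fun la => (la - xi l) * (i == j)%:R + eta * Pal C n l i j)).
    by move=> x; rewrite !mxE mulr_natr.
  by polyfun.
have Mono_poly : polyfun_mx (Mono eta xi K).
  apply: polyfun_mulmx; first exact: polyfun_mx_const.
  elim: (rev (enum 'I_N)) => [|l s IH] /=; first exact: polyfun_mx_const.
  exact: polyfun_mulmx.
move=> i j; apply: (@eq_polyfun _
  (fun la => \sum_(k : 'I_n) ent (Mono eta xi K la) (k, enum_val i) (k, enum_val j))).
  by move=> x; rewrite mxE.
by apply: polyfun_sum => k; apply: Mono_poly.
Qed.

End TransferMatrixPolynomial.

Lemma T1_eta0_xi (C : numClosedFieldType) n N (xi : 'I_N -> C) (K : 'M[C]_n) l :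
  T1 0 xi K (xi l) = 0.
Proof.
have Mono0 : Mono 0 xi K (xi l) = 0.
  rewrite /Mono (_ : foldr _ _ _ = 0) ?mulmx0 //.
  have : l \in rev (enum 'I_N) by rewrite mem_rev mem_enum.
  elim: (rev _) => // k s IH; rewrite in_cons => /orP[/eqP <-|/IH /= ->].
    by rewrite /= /Ral subrr scale0r addr0 raddf0 mul0mx.
  by rewrite mulmx0.
by apply/matrixP => i j; rewrite !mxE big1 // => k _; rewrite /ent Mono0 mxE.
Qed.

Section FinTypeMatrices.
Variable C : numClosedFieldType.

Lemma mkvec_rank (T : finType) (f : T -> C) x : mkvec f (enum_rank x) 0 = f x.
Proof. by rewrite mxE enum_rankK. Qed.

Lemma colP_enum_rank (T : finType) (u v : 'cV[C]_#|{: T}|) :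
  (forall x, u (enum_rank x) 0 = v (enum_rank x) 0) -> u = v.
Proof. by move=> E; apply/matrixP => i j; rewrite ord1 -(enum_valK i) E. Qed.

Lemma sum_pair (I J : finType) (F : I * J -> C) :
  \sum_(p : I * J) F p = \sum_(i : I) \sum_(j : J) F (i, j).
Proof. by rewrite pair_bigA; apply: eq_bigr => -[]. Qed.

Lemma eq_mkvec (T : finType) (f g : T -> C) : f =1 g -> mkvec f = mkvec g.
Proof. by move=> E; apply/matrixP => i j; rewrite !mxE E. Qed.

Lemma mulmx_mkvec_rank (T : finType) (A : 'M[C]_#|{: T}|) (f : T -> C) x :
  (A *m mkvec f) (enum_rank x) 0 = \sum_y ent A x y * f y.
Proof.
rewrite mxE (reindex enum_rank) /=; last by apply: onW_bij; apply: enum_rank_bij.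
by apply: eq_bigr => y _; rewrite mkvec_rank.
Qed.

Lemma mkop_mulmx_mkvec (T : finType) (F : T -> T -> C) (f : T -> C) :
  mkop F *m mkvec f = mkvec (fun x => \sum_y F x y * f y).
Proof.
apply: colP_enum_rank => x; rewrite mulmx_mkvec_rank mkvec_rank.
by apply: eq_bigr => y _; rewrite /ent mxE !enum_rankK.
Qed.

End FinTypeMatrices.

Section ReferenceState.
Variables (C : numClosedFieldType) (n : nat).

Lemma e1_neq0 : (0 < n)%N -> e1 C n != 0.
Proof. by case: n => // n' _; apply/cV0Pn; exists ord0; rewrite mxE oner_neq0. Qed.

Lemma unitmx_e1_neq0 (W : 'M[C]_n) : (0 < n)%N -> W \in unitmx -> W *m e1 C n != 0.
Proof.
move=> n_gt0 W_unit; apply: contra_neq (e1_neq0 n_gt0) => We1_0.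
by rewrite -(mulKmx W_unit (e1 C n)) We1_0 mulmx0.
Qed.

Lemma eigvec_conj (K W J : 'M[C]_n) k (e : 'cV[C]_n) :
  W \in unitmx -> K = W *m J *m invmx W -> J *m e = k *: e -> K *m (W *m e) = k *: (W *m e).
Proof. by move=> W_unit -> Je; rewrite mulmxA mulmxKV // -mulmxA Je scalemxAr. Qed.

End ReferenceState.

Section ProductStates.
Variables (C : numClosedFieldType) (n N : nat).
Local Notation acfg := (acfg n N).
Local Notation cfg := (cfg n N).

Definition pvec (u0 : 'cV[C]_n) (us : 'I_N -> 'cV[C]_n) : 'cV[C]_#|{: acfg}| :=
  mkvec (fun x : acfg => u0 x.1 0 * \prod_l us l (x.2 l) 0).

Lemma eq_pvec u0 us us' : us =1 us' -> pvec u0 us = pvec u0 us'.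
Proof.
by move=> E; apply: eq_mkvec => x; congr (_ * _); apply: eq_bigr => l _; rewrite E.
Qed.

Lemma pvecZ a u0 us : pvec (a *: u0) us = a *: pvec u0 us.
Proof.
by apply: colP_enum_rank => x; rewrite [RHS]mxE /pvec !mkvec_rank mxE mulrA.
Qed.

Lemma pvec_neq0 u : u != 0 -> pvec u (fun=> u) != 0.
Proof.
case/cV0Pn=> i ui_neq0; apply/eqP => /matrixP /(_ (enum_rank (i, [ffun=> i] : cfg)) 0).
rewrite mkvec_rank mxE => /eqP; apply/negP.
by rewrite mulf_neq0 //; apply/prodf_neq0 => l _; rewrite ffunE.
Qed.

Lemma upd_upd (c : cfg) l i k : upd (upd c l i) l k = upd c l k.
Proof. by apply/ffunP => j; rewrite !ffunE; case: (j == l). Qed.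

Lemma upd_id (c : cfg) l : upd c l (c l) = c.
Proof. by apply/ffunP => j; rewrite !ffunE; case: eqP => // ->. Qed.

Lemma Pal_entry_swap (x y : acfg) l :
  (x.1 == y.2 l) && (x.2 == upd y.2 l y.1) = (y == (x.2 l, upd x.2 l x.1)).
Proof.
apply/idP/eqP => [/andP[/eqP-> /eqP->]|->] /=.
  by rewrite ffunE eqxx upd_upd upd_id; case: y.
by rewrite ffunE eqxx upd_upd upd_id !eqxx.
Qed.

Lemma Pal_pvec l u0 us :
  Pal C n l *m pvec u0 us = pvec (us l) (fun k => if k == l then u0 else us k).
Proof.
rewrite /Pal /pvec mkop_mulmx_mkvec; apply: eq_mkvec => x /=.
under eq_bigr do rewrite Pal_entry_swap.
rewrite (bigD1 (x.2 l, upd x.2 l x.1)) //= eqxx mul1r [X in _ + X]big1 ?addr0; last first.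
  by move=> y /negbTE ->; rewrite mul0r.
rewrite (bigD1 l) //= [in RHS](bigD1 l) //= ffunE !eqxx mulrCA; congr (_ * (_ * _)).
by apply: eq_bigr => k /negbTE kl; rewrite ffunE kl.
Qed.

Lemma Kaux_pvec (K : 'M[C]_n) u0 us : Kaux N K *m pvec u0 us = pvec (K *m u0) us.
Proof.
rewrite /Kaux /pvec mkop_mulmx_mkvec; apply: eq_mkvec => x /=.
rewrite sum_pair mxE big_distrl /=; apply: eq_bigr => j _.
rewrite (bigD1 x.2) //= eqxx mulr1 [X in _ + X]big1 ?addr0 ?mulrA // => c /negbTE.
by rewrite eq_sym => ->; rewrite mulr0 mul0r.
Qed.

Lemma Ral_pvec eta l mu u0 us :
  Ral n eta l mu *m pvec u0 us =
  mu *: pvec u0 us + eta *: pvec (us l) (fun k => if k == l then u0 else us k).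
Proof. by rewrite /Ral mulmxDl mul_scalar_mx -scalemxAl Pal_pvec. Qed.

Lemma tenop_tenvec (W : 'M[C]_n) (e : 'cV[C]_n) :
  tenop N W *m tenvec N e = tenvec N (W *m e).
Proof.
apply: colP_enum_rank => c; rewrite /tenop /tenvec mkop_mulmx_mkvec !mkvec_rank.
under [RHS]eq_bigr do rewrite mxE.
by rewrite bigA_distr_bigA /=; apply: eq_bigr => f _; rewrite -big_split.
Qed.

Lemma tenvec_neq0 (w : 'cV[C]_n) : w != 0 -> tenvec N w != 0.
Proof.
case/cV0Pn=> i wi_neq0; apply/eqP => /matrixP /(_ (enum_rank ([ffun=> i] : cfg)) 0).
by rewrite mkvec_rank mxE => /eqP; apply/negP/prodf_neq0 => l _; rewrite ffunE.
Qed.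

End ProductStates.

Section RmatrixProducts.
Variables (C : numClosedFieldType) (n N : nat) (eta : C) (mu : 'I_N -> C) (w : 'cV[C]_n).

Definition wsub (l : 'I_N) (u : 'cV[C]_n) (k : 'I_N) := if k == l then u else w.

Definition Rprod (s : seq 'I_N) : 'M[C]_#|{: acfg n N}| :=
  foldr (fun l A => Ral n eta l (mu l) *m A) 1%:M s.

Lemma Ral_pvec_wsub l k u : k != l ->
  Ral n eta l (mu l) *m pvec w (wsub k u) = (mu l + eta) *: pvec w (wsub k u).
Proof.
move=> kl; rewrite Ral_pvec scalerDl; congr (_ + _ *: _).
rewrite /wsub eq_sym (negbTE kl); apply: eq_pvec => j.
by case: eqP => // ->; rewrite eq_sym (negbTE kl).
Qed.

Lemma Rprod_pvec_const s :
  Rprod s *m pvec w (fun=> w) = (\prod_(l <- s) (mu l + eta)) *: pvec w (fun=> w).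
Proof.
elim: s => [|l s IH]; first by rewrite mul1mx big_nil scale1r.
rewrite /= -mulmxA IH -scalemxAr Ral_pvec big_cons.
rewrite (@eq_pvec _ _ _ _ _ (fun=> w)); last by move=> k; case: (k == l).
by rewrite -scalerDl scalerA mulrC.
Qed.

Lemma Rprod_pvec s : uniq s -> exists c : 'I_N -> C, forall u,
  Rprod s *m pvec u (fun=> w) =
  (\prod_(l <- s) mu l) *: pvec u (fun=> w) + \sum_(l <- s) c l *: pvec w (wsub l u).
Proof.
elim: s => [|l s IH] /=.
  by exists (fun=> 0) => u; rewrite mul1mx big_nil scale1r big_nil addr0.
case/andP => l_notin_s /IH[c Hc].
exists (fun k => if k == l then eta * \prod_(k <- s) mu k else c k * (mu l + eta)) => u.
have k_neq_l k : k \in s -> k != l by apply: contraTneq => ->.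
rewrite -mulmxA Hc mulmxDr -scalemxAr Ral_pvec mulmx_sumr !big_cons eqxx.
rewrite (eq_big_seq (fun k => (c k * (mu l + eta)) *: pvec w (wsub k u))); last first.
  by move=> k /k_neq_l kl; rewrite -scalemxAr Ral_pvec_wsub // scalerA mulrC.
rewrite [in RHS](eq_big_seq (fun k => (c k * (mu l + eta)) *: pvec w (wsub k u))); last first.
  by move=> k /k_neq_l /negbTE ->.
by rewrite scalerDr !scalerA addrA [_ * mu l]mulrC [_ * eta]mulrC.
Qed.

End RmatrixProducts.

Section TransferMatrixOnProductStates.
Variables (C : numClosedFieldType) (n N : nat) (eta : C) (xi : 'I_N -> C) (K : 'M[C]_n).
Local Notation cfg := (cfg n N).

Definition ptrace (F : 'I_n -> 'cV[C]_#|{: acfg n N}|) : 'cV[C]_(Hdim n N) :=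
  mkvec (fun c : cfg => \sum_i F i (enum_rank (i, c)) 0).

Lemma eq_ptrace F G : F =1 G -> ptrace F = ptrace G.
Proof. by move=> FG; apply: eq_mkvec => c; apply: eq_bigr => i _; rewrite FG. Qed.

Lemma ptrace_sum (I : Type) (r : seq I) (a : I -> C) F :
  ptrace (fun i => \sum_(k <- r) a k *: F k i) = \sum_(k <- r) a k *: ptrace (F k).
Proof.
apply: colP_enum_rank => c; rewrite mkvec_rank summxE.
under eq_bigr do rewrite summxE.
rewrite exchange_big; apply: eq_bigr => k _.
by rewrite mxE mkvec_rank big_distrr; apply: eq_bigr => i _; rewrite mxE.
Qed.

Lemma T1_mul_tenvec la (w : 'cV[C]_n) :
  T1 eta xi K la *m tenvec N w =
  ptrace (fun i => Mono eta xi K la *m pvec (delta_mx i 0) (fun=> w)).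
Proof.
apply: colP_enum_rank => c; rewrite /T1 /tenvec mkop_mulmx_mkvec !mkvec_rank.
under eq_bigr do rewrite big_distrl.
rewrite exchange_big; apply: eq_bigr => i _ /=.
rewrite /pvec mulmx_mkvec_rank sum_pair (bigD1 i) //= [X in _ + X]big1 ?addr0.
  by apply: eq_bigr => c' _; rewrite mxE !eqxx mul1r.
by move=> j ji; apply: big1 => c' _; rewrite mxE (negbTE ji) mul0r mulr0.
Qed.

Lemma ptrace_wsub (w : 'cV[C]_n) l :
  ptrace (fun i => pvec w (wsub w l (delta_mx i 0))) = tenvec N w.
Proof.
apply: colP_enum_rank => c; rewrite !mkvec_rank (bigD1 (c l)) //= [X in _ + X]big1 ?addr0.
  rewrite mkvec_rank [in RHS](bigD1 l) //= (bigD1 l) //= /wsub eqxx mxE !eqxx mul1r.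
  by congr (_ * _); apply: eq_bigr => k /negbTE ->.
move=> i il; rewrite mkvec_rank (bigD1 l) //= /wsub eqxx mxE eq_sym (negbTE il).
by rewrite mul0r mulr0.
Qed.

Lemma T1_tenvec k1 (w : 'cV[C]_n) m : w != 0 -> K *m w = k1 *: w ->
  T1 eta xi K (xi m) *m tenvec N w = alpha1 k1 eta xi (xi m) *: tenvec N w.
Proof.
(* At [la = xi m] the factor [R_{a,m}(0) = eta P_{a,m}] moves the auxiliary vector onto a
   site, killing the term [prod mu]; the coefficients [c l] are then summed by comparing
   with the case [u = w]. *)
move=> w_neq0 Kw; pose mu l := xi m - xi l; pose s := rev (enum 'I_N).
have [|c Hc] := @Rprod_pvec _ n _ eta mu w s; first by rewrite rev_uniq enum_uniq.
have mu0 : \prod_(l <- s) mu l = 0 by rewrite big_rev big_enum (bigD1 m) //= /mu subrr mul0r.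
have Mono_pvec u : Mono eta xi K (xi m) *m pvec u (fun=> w) =
                   \sum_(l <- s) (c l * k1) *: pvec w (wsub w l u).
  rewrite /Mono -mulmxA (_ : foldr _ _ _ = Rprod n eta mu s) // Hc mu0 scale0r add0r.
  by rewrite mulmx_sumr; apply: eq_bigr => l _; rewrite -scalemxAr Kaux_pvec Kw pvecZ scalerA.
have sum_c : \sum_(l <- s) c l = \prod_(l <- s) (mu l + eta).
  have := Rprod_pvec_const eta mu w s; rewrite Hc mu0 scale0r add0r.
  have wsub_w (l : 'I_N) : pvec w (wsub w l w) = pvec w (fun=> w).
    by apply: eq_pvec => k; rewrite /wsub; case: (k == l).
  rewrite (eq_bigr (fun l => c l *: pvec w (fun=> w))) => [|l _]; last by rewrite wsub_w.
  move/eqP; rewrite -scaler_suml -subr_eq0 -scalerBl scaler_eq0 (negbTE (pvec_neq0 N w_neq0)).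
  by rewrite orbF subr_eq0 => /eqP.
rewrite T1_mul_tenvec; under eq_ptrace do rewrite Mono_pvec.
rewrite ptrace_sum; under eq_bigr do rewrite ptrace_wsub.
rewrite -scaler_suml -big_distrl /= sum_c /alpha1 mulrC big_rev big_enum.
by congr (_ * _ *: _); apply: eq_bigr => l _; rewrite /mu addrAC.
Qed.

Lemma t0vec_neq0 (W : 'M[C]_n) : W \in unitmx -> (0 < n)%N -> t0vec N W != 0.
Proof. by move=> W_unit n_gt0; rewrite /t0vec tenop_tenvec tenvec_neq0 ?unitmx_e1_neq0. Qed.

Lemma T1_t0vec k1 (W J : 'M[C]_n) m : W \in unitmx ->
  K = W *m J *m invmx W -> J *m e1 C n = k1 *: e1 C n -> (0 < n)%N ->
  T1 eta xi K (xi m) *m t0vec N W = alpha1 k1 eta xi (xi m) *: t0vec N W.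
Proof.
move=> W_unit K_eq J_e1 n_gt0; rewrite /t0vec tenop_tenvec.
by rewrite (T1_tenvec _ (unitmx_e1_neq0 n_gt0 W_unit) (eigvec_conj W_unit K_eq J_e1)).
Qed.

End TransferMatrixOnProductStates.

Section QuantumSpectralCurve.
Variables (C : numClosedFieldType) (n N : nat) (eta : C) (xi : 'I_N -> C) (K : 'M[C]_n).
Variables (k1 : C) (t1 : C -> C) (lam : seq C).
Local Notation tfun := (tfun eta xi K t1).
Local Notation alpha := (alpha k1 eta xi).
Local Notation alpha1 := (alpha1 k1 eta xi).

Definition phi (y : C) := \prod_(x <- lam) (y - x).

(* Left-hand side of the spectral curve of order [j]: the theorem assumes [qsc n = 0], and
   the lower orders appear when it is expanded along its first term ([qsc_recl]). *)
Definition qsc (j : nat) (la : C) :=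
  \sum_(b < j.+1) alpha b la * phi (la - b%:R * eta) * tfun (j - b) (la - b%:R * eta).

Lemma tfun_polyfun m : polyfun t1 -> polyfun (tfun m).
Proof.
move=> t1_poly; case: m => [|m] /=; first exact: polyfun_const.
by case: (m.+1 == n); [|case: (m == 0%N)]; rewrite ?/qdet ?/gfun; polyfun.
Qed.

Lemma alpha_polyfun b : polyfun (alpha b).
Proof. by case: b => [|b] /=; rewrite ?/alpha1; polyfun. Qed.

Lemma qsc_polyfun j : polyfun t1 -> polyfun (qsc j).
Proof.
move=> t1_poly; apply: polyfun_sum => b; apply: polyfun_mul; last first.
  by apply: polyfun_comp; [apply: tfun_polyfun | polyfun].
by apply: polyfun_mul; [apply: alpha_polyfun | rewrite /phi; polyfun].
Qed.

Lemma alpha_recl b la : alpha b.+1 la = - alpha1 la * alpha b (la - eta).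
Proof.
case: b => [|b] /=; first by rewrite big_ord1 expr0 mul1r mul0r subr0 mulrN1 opprK.
rewrite big_ord_recl mul0r subr0 exprS.
rewrite [X in alpha1 la * X](eq_bigr (fun i : 'I_b.+1 => alpha1 (la - eta - i%:R * eta))).
  by rewrite mulN1r !mulNr mulrCA.
by move=> i _; rewrite lift0 -natr1 mulrDl mul1r opprD addrA addrAC.
Qed.

Lemma alpha_recr b la : alpha b.+1 la = - alpha b la * alpha1 (la - b%:R * eta).
Proof.
case: b => [|b] /=; first by rewrite big_ord1 expr0 mul1r opprK mul1r.
by rewrite big_ord_recr exprS /= mulN1r !mulNr mulrA.
Qed.

Lemma alpha_neq0 b la :
  (forall h, (h < b)%N -> alpha1 (la - h%:R * eta) != 0) -> alpha b la != 0.
Proof.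
case: b => [|b] /= alpha1_neq0; first by rewrite oppr_eq0 oner_eq0.
rewrite mulf_neq0 ?expf_neq0 ?oppr_eq0 ?oner_eq0 //.
by apply/prodf_neq0 => h _; apply: alpha1_neq0.
Qed.

Lemma qsc_recl j la :
  qsc j.+1 la = - (phi la * tfun j.+1 la) - alpha1 la * qsc j (la - eta).
Proof.
rewrite /qsc big_ord_recl mul0r subr0 subn0 [alpha _ la]/= mulN1r mulNr; congr (_ + _).
rewrite -mulNr big_distrr; apply: eq_bigr => b _.
by rewrite lift0 alpha_recl subSS -natr1 mulrDl mul1r opprD addrA [la - _ - _]addrAC /= !mulrA.
Qed.

Lemma qdet_factor la : qdet eta xi K la = (\prod_(c < N) (la + eta - xi c)) *
  (\det K * \prod_(c < N) \prod_(1 <= m < n) (la - xi c - m%:R * eta)).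
Proof.
rewrite /qdet big_split /= mulrCA; congr (_ * (_ * _)).
by apply: eq_bigr => c _; rewrite addrAC.
Qed.

Lemma tfun_root m a :
  (m.+2 < n)%N -> tfun m.+2 (xi a + m.+1%:R * eta) = 0.
Proof.
move=> lt_m_n; rewrite /= ltn_eqF // (bigD1 a) //= big_nat_recr //=.
by rewrite addrAC subrr add0r subrr !(mulr0, mul0r).
Qed.

Lemma qsc_at_xi j a : (j.+1 < n)%N ->
  qsc j.+1 (xi a + j%:R * eta) =
  alpha j (xi a + j%:R * eta) * (phi (xi a) * t1 (xi a) - alpha1 (xi a) * phi (xi a - eta)).
Proof.
move=> lt_j_n; have lt_1_n : (1 < n)%N by apply: leq_ltn_trans lt_j_n.
rewrite /qsc !big_ord_recr (alpha_recr j) /= big1 ?add0r => [|b _]; last first.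
  have lt_b_j : (b < j)%N := ltn_ord b.
  rewrite (_ : xi a + j%:R * eta - b%:R * eta = xi a + (j - b.+1).+1%:R * eta); last first.
    by rewrite subnSK // natrB 1?ltnW // mulrBl addrA.
  rewrite (_ : (j.+1 - b = (j - b.+1).+2)%N); last by lia.
  by rewrite tfun_root ?mulr0 //; lia.
rewrite !addrK subSnn subnn -natr1 mulrDl mul1r opprD addrA addrK /= ltn_eqF //.
by ring.
Qed.

End QuantumSpectralCurve.

Section SpectralCurveAtInhomogeneities.
Variables (C : numClosedFieldType) (i N : nat) (eta : C) (xi : 'I_N -> C).
Variables (K : 'M[C]_i.+2) (k1 : C) (t1 : C -> C) (lam : seq C).
Local Notation n := i.+2.
Local Notation alpha1 := (alpha1 k1 eta xi).
Local Notation phi := (phi lam).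
Local Notation qsc := (qsc eta xi K k1 t1 lam).

Hypothesis xi_generic : forall a b : 'I_N, a != b ->
  forall r : nat, (r < n)%N -> xi a != xi b - r%:R * eta.
Hypotheses (eta_neq0 : eta != 0) (k1_neq0 : k1 != 0).

Lemma alpha1_xi_neq0 a r : (r.+1 < n)%N -> alpha1 (xi a + r%:R * eta) != 0.
Proof.
move=> lt_r_n; rewrite /alpha1 mulf_neq0 //; apply/prodf_neq0 => c _.
have -> : xi a + r%:R * eta + eta - xi c = xi a - (xi c - r.+1%:R * eta).
  by rewrite -natr1; ring.
have [<-|ac] := eqVneq a c.
  by rewrite opprB addrC subrK mulf_neq0 // pnatr_eq0.
by rewrite subr_eq0; apply: xi_generic.
Qed.

Hypothesis t1_poly : polyfun t1.
Hypothesis qsc_eq0 : forall la, qsc n la = 0.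

Lemma t1_xi_qsc a : phi (xi a) * t1 (xi a) = alpha1 (xi a) * phi (xi a - eta).
Proof.
(* [G] is the spectral curve divided by [prod_c (la + eta - xi c)]; being polynomial it
   vanishes identically, and at [la = xi a + (n-1) eta] only its [t_1] and [t_0] terms
   survive. *)
pose G la := phi la * (\det K * \prod_(c < N) \prod_(1 <= m < n) (la - xi c - m%:R * eta)) +
              k1 * qsc i.+1 (la - eta).
have G0 : G =1 fun=> 0.
  apply: (polyfun_mul_eq0 (d := fun la => \prod_(c < N) (la + eta - xi c))
                          (p := \prod_(c < N) ('X + (eta - xi c)%:P))) => [|x||x].
  - by apply: monic_neq0; apply: monic_prod => c _; apply: monicXaddC.
  - by rewrite horner_prod; apply: eq_bigr => c _; rewrite hornerD hornerX hornerC addrA.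
  - rewrite /G; apply: polyfun_add; first by rewrite /phi; polyfun.
    by apply: polyfun_mul; [polyfun | apply: polyfun_comp; [apply: qsc_polyfun | polyfun]].
  - rewrite -[RHS]oppr0 -(qsc_eq0 x) qsc_recl [tfun _ _ _ _ n]/= eqxx qdet_factor /alpha1 /G.
    by ring.
have qdet_red0 :
    \prod_(c < N) \prod_(1 <= m < n) (xi a + i.+1%:R * eta - xi c - m%:R * eta) = 0.
  by rewrite (bigD1 a) //= big_nat_recr //= addrAC subrr add0r subrr !(mulr0, mul0r).
have alpha_i_neq0 : alpha k1 eta xi i (xi a + i%:R * eta) != 0.
  apply: alpha_neq0 => h lt_h_i.
  rewrite -addrA -mulrBl -natrB 1?ltnW // alpha1_xi_neq0 //; lia.
have := G0 (xi a + i.+1%:R * eta); rewrite /G qdet_red0 !mulr0 add0r.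
rewrite -natr1 mulrDl mul1r addrA addrK qsc_at_xi //.
by move/eqP; rewrite !mulf_eq0 (negbTE k1_neq0) (negbTE alpha_i_neq0) subr_eq0 => /eqP.
Qed.

End SpectralCurveAtInhomogeneities.

Lemma prod_subrC (C : comPzRingType) (r : seq C) y :
  \prod_(x <- r) (y - x) = (-1) ^+ size r * \prod_(x <- r) (x - y).
Proof.
elim: r => [|x r IH]; first by rewrite !big_nil mulr1.
by rewrite !big_cons IH /= exprS; ring.
Qed.

Lemma prod_bfun_qsc (C : numClosedFieldType) n N (eta : C) (xi : 'I_N -> C) (lam : seq C)
    (al t : 'I_N -> C) (h : cfg n N) :
  (forall a, phi lam (xi a) * t a = al a * phi lam (xi a - eta)) ->
  (\prod_(x <- lam) bfun eta xi h x) * \prod_a al a ^+ h a =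
  (\prod_a (\prod_(x <- lam) (x - xi a)) ^+ n.-1) * \prod_a t a ^+ h a.
Proof.
move=> qsc_xi; rewrite /bfun exchange_big -!big_split /=; apply: eq_bigr => a _.
rewrite big_split /= !prodrXl.
set P := \prod_(x <- lam) (x - xi a); set Q := \prod_(x <- lam) (x - xi a + eta).
have PQ : Q * al a = P * t a.
  have QE : \prod_(x <- lam) (x - (xi a - eta)) = Q.
    by apply: eq_bigr => x _; rewrite opprB addrA addrAC.
  apply: (@mulfI _ ((-1) ^+ size lam)); first by rewrite signr_eq0.
  have := qsc_xi a; rewrite /phi !prod_subrC -/P QE => qsc_xi_a.
  by rewrite [RHS]mulrA qsc_xi_a; ring.
have h_le : (h a <= n.-1)%N by have := ltn_ord (h a); lia.
by rewrite -mulrA -exprMn PQ exprMn mulrA -exprD subnK.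
Qed.

Section SeparationOfVariables.
Variables (C : numClosedFieldType) (n N : nat) (eta : C) (xi : 'I_N -> C) (K : 'M[C]_n).
Variable S : 'rV[C]_(Hdim n N).
Local Notation T1 := (T1 eta xi K).
Local Notation hcovec := (hcovec eta xi K S).

Definition hcoord (h : cfg n N) (v : 'cV[C]_(Hdim n N)) := (hcovec h *m v) 0 0.

Lemma hcoordZ h a v : hcoord h (a *: v) = a * hcoord h v.
Proof. by rewrite /hcoord -scalemxAr mxE. Qed.

Lemma hcoord_joint_eigvec v (c : 'I_N -> C) : (forall l, T1 (xi l) *m v = c l *: v) ->
  forall h, hcoord h v = (\prod_l c l ^+ h l) * (S *m v) 0 0.
Proof.
move=> v_eig h; rewrite /hcoord /hcovec -mulmxA.
have T1X l k : T1 (xi l) ^+ k *m v = c l ^+ k *: v.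
  elim: k => [|k IH]; first by rewrite expr0 mul1mx scale1r.
  by rewrite exprS -mulmxE -mulmxA IH -scalemxAr v_eig scalerA -exprSr.
suff -> : forall s, foldr (fun l A => T1 (xi l) ^+ h l *m A) 1%:M s *m v =
                    (\prod_(l <- s) c l ^+ h l) *: v by rewrite -scalemxAr mxE big_enum.
elim=> [|l s IH] /=; first by rewrite mul1mx big_nil scale1r.
by rewrite -mulmxA IH -scalemxAr T1X big_cons scalerA mulrC.
Qed.

Lemma hcoord_tvec (B : C -> 'M[C]_(Hdim n N)) lam v h :
  (forall la, hcovec h *m B la = bfun eta xi h la *: hcovec h) ->
  hcoord h (tvec B lam v) = (\prod_(x <- lam) bfun eta xi h x) * hcoord h v.
Proof.
move=> B_diag; elim: lam => [|x lam IH] /=; first by rewrite big_nil mul1r.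
by rewrite /hcoord mulmxA B_diag -scalemxAl mxE -/(hcoord _ _) IH big_cons mulrA.
Qed.

Lemma hmatrix_coord v h : (hmatrix eta xi K S *m v) (enum_rank h) 0 = hcoord h v.
Proof. by rewrite /hcoord !mxE; apply: eq_bigr => j _; rewrite mxE enum_rankK. Qed.

Hypothesis hbasis : hmatrix eta xi K S \in unitmx.

Lemma hcoord_inj x y : (forall h, hcoord h x = hcoord h y) -> x = y.
Proof.
move=> xy; apply: (can_inj (mulKmx hbasis)); apply/matrixP => r j.
by rewrite ord1 -(enum_valK r) !hmatrix_coord.
Qed.

Lemma tvec_collinear (B : C -> 'M[C]_(Hdim n N)) lam t0 v0 (al t : 'I_N -> C) :
  (forall la h, hcovec h *m B la = bfun eta xi h la *: hcovec h) ->
  (forall l, T1 (xi l) *m t0 = al l *: t0) -> (forall l, T1 (xi l) *m v0 = t l *: v0) ->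
  (forall a, phi lam (xi a) * t a = al a * phi lam (xi a - eta)) -> (S *m v0) 0 0 != 0 ->
  tvec B lam t0 =
  ((\prod_l (\prod_(x <- lam) (x - xi l)) ^+ n.-1) * (S *m t0) 0 0 / (S *m v0) 0 0) *: v0.
Proof.
move=> B_diag t0_eig v0_eig qsc_xi Sv0_neq0; apply: hcoord_inj => h.
rewrite hcoordZ (hcoord_tvec _ _ (B_diag^~ h)) (hcoord_joint_eigvec t0_eig) mulrA.
by rewrite (prod_bfun_qsc h qsc_xi) (hcoord_joint_eigvec v0_eig); field.
Qed.

Lemma joint_eigvec_S_neq0 (v : 'cV[C]_(Hdim n N)) (c : 'I_N -> C) :
  v != 0 -> (forall l, T1 (xi l) *m v = c l *: v) -> (S *m v) 0 0 != 0.
Proof.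
move=> v_neq0 v_eig; apply: contraNneq v_neq0 => Sv0; apply/eqP/hcoord_inj => h.
by rewrite (hcoord_joint_eigvec v_eig) Sv0 /hcoord mulmx0 mulr0 mxE.
Qed.

Lemma joint_eigvec_unique (x y : 'cV[C]_(Hdim n N)) (c : 'I_N -> C) :
  (forall l, T1 (xi l) *m x = c l *: x) -> (forall l, T1 (xi l) *m y = c l *: y) ->
  (S *m y) 0 0 != 0 -> x = ((S *m x) 0 0 / (S *m y) 0 0) *: y.
Proof.
move=> x_eig y_eig Sy_neq0; apply: hcoord_inj => h.
by rewrite hcoordZ !(hcoord_joint_eigvec x_eig, hcoord_joint_eigvec y_eig) mulrCA divfK.
Qed.

Lemma hbasis_eta_neq0 : (1 < n)%N -> (0 < N)%N -> eta != 0.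
Proof.
move=> n_gt1 N_gt0; apply: contra_neq (@oner_neq0 C) => eta0.
pose h : cfg n N := [ffun=> Ordinal n_gt1].
have h_row0 : hcovec h = 0.
  rewrite /hcovec; have : Ordinal N_gt0 \in enum 'I_N by rewrite mem_enum.
  by case: (enum 'I_N) => [//|l s] _ /=; rewrite ffunE expr1 eta0 T1_eta0_xi mul0mx mulmx0.
pose y := invmx (hmatrix eta xi K S) *m delta_mx (enum_rank h) (0 : 'I_1).
by have := hmatrix_coord y h; rewrite mulKVmx // /hcoord h_row0 mul0mx !mxE !eqxx.
Qed.

End SeparationOfVariables.

Theorem mainTheorem6 (C : numClosedFieldType) (n N : nat) (eta : C) (xi : 'I_N -> C)
  (K W KJ : 'M[C]_n) (k1 : C) (S : 'rV[C]_(Hdim n N))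
  (B : C -> 'M[C]_(Hdim n N)) (t1 : C -> C) (lam : seq C) :
  (1 < n)%N -> (0 < N)%N ->
  (* generic inhomogeneities *)
  (forall a b : 'I_N, a != b ->
     xi a != xi b + eta /\ forall r : nat, (r < n)%N -> xi a != xi b - r%:R * eta) ->
  (* K is w-simple, K = W_K K_J W_K^{-1}, K_J e_1 = k_1 e_1, k_1 != 0 *)
  wsimple K ->
  W \in unitmx -> jordan_form KJ -> K = W *m KJ *m invmx W ->
  KJ *m e1 C n = k1 *: e1 C n -> k1 != 0 ->
  (* the covectors <h_1..h_N| form a basis of the dual of H *)
  hmatrix eta xi K S \in unitmx ->
  (* B^{(K)}(lambda) is diagonal in that basis with eigenvalues b_h(lambda) *)
  (forall (la : C) (h : cfg n N),
     hcovec eta xi K S h *m B la = bfun eta xi h la *: hcovec eta xi K S h) ->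
  (* t_1 is an eigenvalue of T_1^{(K)} *)
  (exists2 v : 'cV[C]_(Hdim n N), v != 0 &
     forall la : C, T1 eta xi K la *m v = t1 la *: v) ->
  (* phi_t(lambda) = prod_a (lambda - lambda_a), M <= N, lambda_a != xi_b *)
  (size lam <= N)%N ->
  (forall x, x \in lam -> forall b : 'I_N, x != xi b) ->
  (* quantum spectral curve with abar = k_1 *)
  (forall la : C,
     \sum_(b < n.+1) alpha k1 eta xi b la *
        (\prod_(x <- lam) (la - b%:R * eta - x)) *
        tfun eta xi K t1 (n - b) (la - b%:R * eta) = 0) ->
  let tv := tvec B lam (@t0vec C n N W) in
  [/\ tv != 0,
      forall la : C, T1 eta xi K la *m tv = t1 la *: tv &
      forall v : 'cV[C]_(Hdim n N),
        (forall la : C, T1 eta xi K la *m v = t1 la *: v) ->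
        exists c : C, v = c *: tv].
Proof.
destruct n as [|[|i]]; [by []|by []|].
move=> _ N_gt0 xi_gen _ W_unit _ K_eq KJ_e1 k1_neq0 hbasis B_diag [v0 v0_neq0 v0_eig] _
  lam_xi qsc_eq0 tv.
have eta_neq0 := hbasis_eta_neq0 hbasis isT N_gt0.
have t1_poly := eigenvalue_polyfun (T1_polyfun_mx eta xi K) v0_neq0 v0_eig.
have t1_xi := t1_xi_qsc (fun a b ab => (xi_gen a b ab).2) eta_neq0 k1_neq0 t1_poly qsc_eq0.
have t0_eig l := T1_t0vec eta xi l W_unit K_eq KJ_e1 isT.
have v0_eig_xi l := v0_eig (xi l).
have St0_neq0 := joint_eigvec_S_neq0 hbasis (t0vec_neq0 N W_unit isT) t0_eig.
have Sv0_neq0 := joint_eigvec_S_neq0 hbasis v0_neq0 v0_eig_xi.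
have := tvec_collinear hbasis B_diag t0_eig v0_eig_xi t1_xi Sv0_neq0; rewrite -/tv.
set c := _ / _ => tv_eq.
have c_neq0 : c != 0.
  rewrite /c !mulf_neq0 ?invr_eq0 //; apply/prodf_neq0 => l _; rewrite expf_neq0 //.
  by rewrite prodf_seq_neq0; apply/allP => x /lam_xi x_xi; rewrite subr_eq0 x_xi.
split=> [|la|v v_eig]; first by rewrite tv_eq scaler_eq0 negb_or c_neq0.
  by rewrite tv_eq -scalemxAr v0_eig !scalerA mulrC.
exists ((S *m v) 0 0 / (S *m v0) 0 0 / c); rewrite tv_eq scalerA divfK //.
exact: (joint_eigvec_unique hbasis (fun l => v_eig (xi l)) v0_eig_xi).
Qed.
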